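(* Let $A\in\mathbb{R}^{n\times n}$ and $B\in\mathbb{R}^{n\times m}$ with $\rho(|A|)<1$, and let $T$ be a positive integer. Let $i,j\in\{1,\dots,n\}$, $i\neq j$, and $w\in\mathbb{R}$ be such that $\rho(|A|+|w|e_je_i^{\top})<1$. Then, whenever the respective Gramians are positive definite, $$\operatorname{tr}(\mathcal{W}_A^{-1})\ge\frac{n^2}{\operatorname{tr}(\mathcal{H}_{\mathcal{X}})},\qquad \operatorname{tr}(\mathcal{W}^{-1}_{A+we_je_i^{\top}})\ge\frac{n^2}{(1+\alpha\beta)\operatorname{tr}(\mathcal{H}_{\mathcal{X}})+\alpha^2\gamma\bar\gamma}.$$
   Context: $|\cdot|$ is taken entrywise; $\rho$ is the spectral radius; $e_k$ is the $k$-th canonical unit vector; $\|\cdot\|$ is the Euclidean norm. For $Z\in\mathbb{R}^{n\times n}$, $\mathcal{W}_Z=\sum_{t=0}^{T-1}Z^tBB^{\top}(Z^t)^{\top}$. Define $\mathcal{X}=(I-|A|)^{-1}$, $\mathcal{H}_{\mathcal{X}}=\mathcal{X}|B||B|^{\top}\mathcal{X}^{\top}$, $\alpha_{pq}=\frac{|w|}{1-|w|e_p^{\top}\mathcal{X}e_q}$, $\alpha=\max_{p\neq q}\alpha_{pq}$, $\beta=\max\{\max_{p\neq q}2e_p^{\top}\mathcal{X}e_q,\ \max_{p\neq q}e_p^{\top}\mathcal{X}e_q+\max_{q}\|\mathcal{X}e_q\|\}$, $\gamma=\max_k e_k^{\top}\mathcal{X}^{\top}\mathcal{X}e_k$, $\bar\gamma=\max_k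 e_k^{\top}\mathcal{X}|B||B|^{\top}\mathcal{X}^{\top}e_k$. *)

From HB Require Import structures.
From mathcomp Require Import all_boot all_order all_algebra.
From mathcomp Require Import boolp classical_sets reals.
From mathcomp Require Import complex.
Set Implicit Arguments. Unset Strict Implicit. Unset Printing Implicit Defensive.
Import Order.TTheory GRing.Theory Num.Theory.
Local Open Scope ring_scope.

Section Defs.
Variable R : realType.

Definition absmx m n (M : 'M[R]_(m, n)) : 'M[R]_(m, n) := map_mx Num.norm M.

Definition spectral_radius n (M : 'M[R]_n) : R :=
  sup [set r : R | exists lam : R[i],
        eigenvalue (map_mx (fun x : R => x%:C%C) M) lam /\ r%:C%C = `|lam|].

Definition unitv n (k : 'I_n) : 'cV[R]_n := delta_mx k 0.

Definition gramian n m (T : nat) (Z : 'M[R]_n) (B : 'M[R]_(n, m)) : 'M[R]_n :=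
  \sum_(t < T) (Z ^+ t *m B *m B^T *m (Z ^+ t)^T).

Definition posdef n (M : 'M[R]_n) : Prop :=
  M^T = M /\ forall x : 'cV[R]_n, x != 0 -> 0 < (x^T *m M *m x) 0 0.

Definition Xmx n (A : 'M[R]_n) : 'M[R]_n := invmx (1%:M - absmx A).

Definition Hmx n m (A : 'M[R]_n) (B : 'M[R]_(n, m)) : 'M[R]_n :=
  Xmx A *m absmx B *m (absmx B)^T *m (Xmx A)^T.

Definition alpha_pq n (A : 'M[R]_n) (w : R) (p q : 'I_n) : R :=
  `|w| / (1 - `|w| * ((unitv p)^T *m Xmx A *m unitv q) 0 0).

Definition alpha n (A : 'M[R]_n) (w : R) : R :=
  \big[Num.max/0]_(p < n) \big[Num.max/0]_(q < n | q != p) alpha_pq A w p q.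

Definition colnorm n (v : 'cV[R]_n) : R := Num.sqrt (\sum_(k < n) v k 0 ^+ 2).

Definition beta n (A : 'M[R]_n) : R :=
  let mx := \big[Num.max/0]_(p < n) \big[Num.max/0]_(q < n | q != p)
              ((unitv p)^T *m Xmx A *m unitv q) 0 0 in
  Num.max (\big[Num.max/0]_(p < n) \big[Num.max/0]_(q < n | q != p)
              (2 * ((unitv p)^T *m Xmx A *m unitv q) 0 0))
          (mx + \big[Num.max/0]_(q < n) colnorm (Xmx A *m unitv q)).

Definition gamma n (A : 'M[R]_n) : R :=
  \big[Num.max/0]_(k < n) ((unitv k)^T *m (Xmx A)^T *m Xmx A *m unitv k) 0 0.

Definition gammabar n m (A : 'M[R]_n) (B : 'M[R]_(n, m)) : R :=
  \big[Num.max/0]_(k < n)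
     ((unitv k)^T *m Xmx A *m absmx B *m (absmx B)^T *m (Xmx A)^T *m unitv k) 0 0.

End Defs.
Arguments unitv {R n} k.

From HB Require Import structures.
From mathcomp Require Import all_boot all_order all_algebra.
From mathcomp Require Import boolp classical_sets reals complex.
From mathcomp Require Import lra ring.
Import Order.TTheory GRing.Theory Num.Theory.
Set Implicit Arguments. Unset Strict Implicit. Unset Printing Implicit Defensive.
Local Open Scope ring_scope.

(* Both bounds come from tr(W^-1) >= n^2 / tr W for a positive definite W (AM-HM on
   the diagonal, using W_kk (W^-1)_kk >= 1) and an upper bound on tr W_Z.  Entrywise
   |Z^t B| <= N^t |B| whenever |Z| <= N, and for N >= 0 with rho(N) < 1 the partial sums
   of the Neumann series stay below (I - N)^-1 >= 0; hence tr W_Z <= ||(I - N)^-1 |B|||_F^2.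
   For Z = A take N = |A|, giving tr H_X.  For Z = A + w e_j e_i^T take
   N = |A| + |w| e_j e_i^T, whose resolvent is the Sherman-Morrison update
   X + alpha_ij X e_j e_i^T X; expanding the Frobenius norm of that rank-one update and
   bounding the cross term by Cauchy-Schwarz yields alpha, beta, gamma and gammabar.
   Nonnegativity of (I - N)^-1 is obtained by continuation along s |-> (I - s N)^-1,
   s in [0, 1], which is defined everywhere because rho(N) < 1. *)

Section RealMatrices.
Variable R : realType.

Lemma normc_real (x : R) : `|x%:C%C| = `|x|%:C%C.
Proof. by rewrite normc_def /= expr0n /= addr0 sqrtr_sqr. Qed.

Definition nnegmx m n (M : 'M[R]_(m, n)) := forall i j, 0 <= M i j.

Definition l1norm m n (M : 'M[R]_(m, n)) : R := \sum_i \sum_j `|M i j|.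

Lemma l1norm_ge0 m n (M : 'M[R]_(m, n)) : 0 <= l1norm M.
Proof. by apply: sumr_ge0 => i _; apply: sumr_ge0. Qed.

Lemma row_l1norm_le m n (M : 'M[R]_(m, n)) i : \sum_j `|M i j| <= l1norm M.
Proof.
by rewrite [l1norm M](bigD1 i) //= lerDl; apply: sumr_ge0 => k _; apply: sumr_ge0.
Qed.

Lemma l1normD m n (M N : 'M[R]_(m, n)) : l1norm (M + N) <= l1norm M + l1norm N.
Proof.
rewrite /l1norm -big_split /=; apply: ler_sum => i _.
by rewrite -big_split /=; apply: ler_sum => j _; rewrite mxE ler_normD.
Qed.

Lemma l1normZ m n (a : R) (M : 'M[R]_(m, n)) : l1norm (a *: M) = `|a| * l1norm M.
Proof.
rewrite /l1norm mulr_sumr; apply: eq_bigr => i _; rewrite mulr_sumr.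
by apply: eq_bigr => j _; rewrite mxE normrM.
Qed.

Lemma l1norm_mul m n p (M : 'M[R]_(m, n)) (N : 'M[R]_(n, p)) :
  l1norm (M *m N) <= l1norm M * l1norm N.
Proof.
rewrite /l1norm mulr_suml; apply: ler_sum => i _.
apply: (le_trans (y := \sum_j \sum_k `|M i k| * `|N k j|)).
  apply: ler_sum => j _; rewrite mxE; apply: (le_trans (ler_norm_sum _ _ _)).
  by apply: ler_sum => k _; rewrite normrM.
rewrite exchange_big mulr_suml; apply: ler_sum => k _ /=.
by rewrite -mulr_sumr ler_wpM2l ?row_l1norm_le.
Qed.

Lemma eigenvalue_norm_le n (N : 'M[R]_n) (lam : R[i]) :
  eigenvalue (map_mx (fun x : R => x%:C%C) N) lam -> `|lam| <= (l1norm N)%:C%C.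
Proof.
move=> /eigenvalueP [v v_eig v_neq0].
set S := \sum_l `|v 0 l|.
have S_gt0 : 0 < S.
  have [l vl_neq0] : exists l, v 0 l != 0.
    apply/existsP; apply: contraR v_neq0 => /existsPn v0; apply/eqP/matrixP => a b.
    by rewrite ord1 mxE; apply/eqP; have := v0 b; rewrite negbK.
  by rewrite /S (bigD1 l) //= ltr_pwDl ?normr_gt0 ?sumr_ge0.
rewrite -(ler_pM2r S_gt0) /S !mulr_sumr.
apply: (le_trans (y := \sum_l \sum_k `|v 0 k| * `|N k l|%:C%C)).
  apply: ler_sum => l _; rewrite -normrM.
  have := congr1 (fun M : 'M_(1, n) => M 0 l) v_eig; rewrite !mxE => <-.
  apply: (le_trans (ler_norm_sum _ _ _)).
  by apply: ler_sum => k _; rewrite !mxE normrM normc_real.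
rewrite exchange_big /=; apply: ler_sum => k _.
by rewrite -mulr_sumr mulrC ler_wpM2r // -rmorph_sum lecR row_l1norm_le.
Qed.

Lemma left_eigenvalue_le_spectral_radius n (N : 'M[R]_n) (r : R) (v : 'rV[R]_n) :
  v != 0 -> v *m N = r *: v -> 0 <= r -> r <= spectral_radius N.
Proof.
move=> v_neq0 v_eig r0; apply: ub_le_sup.
  exists (l1norm N) => x [lam [lam_eig x_lam]]; rewrite -lecR x_lam.
  exact: eigenvalue_norm_le lam_eig.
exists r%:C%C; split; last by rewrite normc_real ger0_norm.
apply/eigenvalueP; exists (map_mx (real_complex R) v); last by rewrite map_mx_eq0.
by rewrite -map_mxM v_eig map_mxZ.
Qed.

Lemma unitmx_1subZ n (N : 'M[R]_n) s :
  spectral_radius N < 1 -> 0 <= s <= 1 -> 1%:M - s *: N \in unitmx.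
Proof.
move=> N_lt1 /andP[s0 s1]; rewrite unitmxE unitfE; apply/negP => /det0P [v v_neq0 v_ker].
have v_fix : v = s *: (v *m N).
  by apply/eqP; rewrite -subr_eq0 scalemxAr -{1}(mulmx1 v) -mulmxBr v_ker.
have s_neq0 : s != 0 by apply: contra v_neq0 => /eqP s_eq0; rewrite v_fix s_eq0 scale0r.
have v_eig : v *m N = s^-1 *: v by rewrite {2}v_fix scalerA mulVf ?scale1r.
have s_inv_ge1 : 1 <= s^-1 by rewrite invf_ge1 // lt_neqAle eq_sym s_neq0.
have := left_eigenvalue_le_spectral_radius v_neq0 v_eig (le_trans ler01 s_inv_ge1).
by move/(le_trans s_inv_ge1); rewrite leNgt N_lt1.
Qed.

Lemma nnegmx_mul m n p (M : 'M[R]_(m, n)) (N : 'M[R]_(n, p)) :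
  nnegmx M -> nnegmx N -> nnegmx (M *m N).
Proof. by move=> M0 N0 i j; rewrite mxE sumr_ge0 // => k _; rewrite mulr_ge0. Qed.

Lemma nnegmxD m n (M N : 'M[R]_(m, n)) : nnegmx M -> nnegmx N -> nnegmx (M + N).
Proof. by move=> M0 N0 i j; rewrite mxE addr_ge0. Qed.

Lemma nnegmxZ m n (a : R) (M : 'M[R]_(m, n)) : 0 <= a -> nnegmx M -> nnegmx (a *: M).
Proof. by move=> a0 M0 i j; rewrite mxE mulr_ge0. Qed.

Lemma nnegmx1 n : nnegmx (1%:M : 'M[R]_n).
Proof. by move=> i j; rewrite mxE ler0n. Qed.

Lemma nnegmxX n (N : 'M[R]_n) t : nnegmx N -> nnegmx (N ^+ t).
Proof.
move=> N0; elim: t => [|t IHt]; first by rewrite expr0 -idmxE; apply: nnegmx1.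
by rewrite exprS -mulmxE; apply: nnegmx_mul.
Qed.

Lemma nnegmx_abs m n (M : 'M[R]_(m, n)) : nnegmx (absmx M).
Proof. by move=> i j; rewrite mxE. Qed.

(* The largest entry c of -Y satisfies c <= q c, where q < 1 is the largest row sum of Q. *)
Lemma nnegmx_fixpoint n p (Q : 'M[R]_n) (Y0 Y : 'M[R]_(n, p)) :
  nnegmx Q -> nnegmx Y0 -> (forall k, \sum_l Q k l < 1) ->
  Y = Y0 + Q *m Y -> nnegmx Y.
Proof.
move=> Q0 Y00 rowQ defY.
pose q := \big[Num.max/0]_k \sum_l Q k l.
pose c := \big[Num.max/0]_k \big[Num.max/0]_l - Y k l.
have q1 : q < 1 by apply: bigmax_lt => // k _; apply: rowQ.
have q0 : 0 <= q := bigmax_ge_id _ _ _ _.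
have c0 : 0 <= c := bigmax_ge_id _ _ _ _.
have negY k l : - Y k l <= c.
  by apply: le_trans (le_bigmax _ _ k); apply: le_bigmax (fun l => - Y k l) l.
have : c <= q * c.
  apply: bigmax_le => [|k _]; first exact: mulr_ge0.
  apply: bigmax_le => [|l _]; first exact: mulr_ge0.
  rewrite {1}defY !mxE opprD.
  apply: (le_trans (y := \sum_k' Q k k' * c)).
    rewrite -[X in _ <= X]add0r lerD ?oppr_le0 // -sumrN.
    by apply: ler_sum => k' _; rewrite -mulrN ler_wpM2l.
  by rewrite -mulr_suml ler_wpM2r // (le_bigmax _ (fun k => \sum_l Q k l) k).
move=> cqc k l; have c_le0 : c <= 0 by nra.
by rewrite -oppr_le0; apply: le_trans (negY k l) c_le0.
Qed.

Lemma resolvent_eq n (N : 'M[R]_n) s u :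
  1%:M - s *: N \in unitmx -> 1%:M - u *: N \in unitmx ->
  invmx (1%:M - u *: N) =
    invmx (1%:M - s *: N) + (u - s) *: (invmx (1%:M - s *: N) *m N *m invmx (1%:M - u *: N)).
Proof.
move=> Us Uu; set Xs := invmx (1%:M - s *: N); set Xu := invmx (1%:M - u *: N).
have split_s : 1%:M - s *: N = (1%:M - u *: N) + (u - s) *: N.
  by rewrite scalerBl addrA subrK.
rewrite -[Xu in LHS]mul1mx -(mulVmx Us) -/Xs split_s mulmxDr mulmxDl -mulmxA.
by rewrite mulmxV // mulmx1 -scalemxAr -scalemxAl.
Qed.

Section Continuation.
Variables (n : nat) (N : 'M[R]_n).
Hypothesis N0 : nnegmx N.
Hypothesis unitN : forall s, 0 <= s <= 1 -> 1%:M - s *: N \in unitmx.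

Local Notation X s := (invmx (1%:M - s *: N)).

Lemma l1norm_resolvent_near s e : 0 <= s <= 1 -> 0 <= e <= 1 ->
  `|e - s| * (l1norm (X s) * l1norm N) <= 2^-1 -> l1norm (X e) <= 2 * l1norm (X s).
Proof.
move=> s01 e01 close.
have : l1norm (X e) <= l1norm (X s) + 2^-1 * l1norm (X e).
  rewrite {1}(resolvent_eq (unitN s01) (unitN e01)).
  apply: le_trans (l1normD _ _) _; rewrite lerD2l l1normZ.
  apply: (le_trans (y := `|e - s| * (l1norm (X s) * l1norm N * l1norm (X e)))).
    rewrite ler_wpM2l //; apply: le_trans (l1norm_mul _ _) _.
    by rewrite ler_wpM2r ?l1norm_ge0 ?l1norm_mul.
  by rewrite mulrA ler_wpM2r ?l1norm_ge0.
lra.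
Qed.

Lemma nnegmx_resolvent_step e u : 0 <= e -> u <= 1 -> e <= u ->
  (u - e) * (l1norm (X e) * l1norm N) < 1 -> nnegmx (X e) -> nnegmx (X u).
Proof.
move=> e0 u1 eu small Xe0.
have e01 : 0 <= e <= 1 by rewrite e0 (le_trans eu).
have u01 : 0 <= u <= 1 by rewrite u1 (le_trans e0).
apply: (nnegmx_fixpoint (Q := (u - e) *: (X e *m N)) (Y0 := X e)) => //.
- by move=> i j; rewrite mxE mulr_ge0 ?subr_ge0 // nnegmx_mul.
- move=> k; apply: le_lt_trans small.
  apply: (le_trans (y := l1norm ((u - e) *: (X e *m N)))).
    by apply: le_trans (row_l1norm_le _ k); apply: ler_sum => l _; apply: ler_norm.
  by rewrite l1normZ ger0_norm ?subr_ge0 // ler_wpM2l ?subr_ge0 // l1norm_mul.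
- by rewrite -scalemxAl; apply: resolvent_eq; apply: unitN.
Qed.

(* Let s be the supremum of the points of [0, 1] where the resolvent is nonnegative.
   Around s the resolvents are bounded by twice the one at s, so from such a point
   just below s one steps past s, unless s = 1. *)
Lemma nnegmx_inv_1sub : nnegmx (invmx (1%:M - N)).
Proof.
pose E : set R := fun s => 0 <= s <= 1 /\ nnegmx (X s).
have E0 : E 0 by rewrite /E /= lexx ler01 scale0r subr0 invmx1; split=> //; apply: nnegmx1.
have supE : has_sup E by split; [exists 0 | exists 1 => x [/andP[]]].
set s := sup E; set a := l1norm (X s) * l1norm N; set r := (4 * (a + 1))^-1.
have s01 : 0 <= s <= 1 by rewrite sup_upper_bound //= ge_sup //; [exists 0 | move=> x [/andP[]]].
have a0 : 0 <= a by rewrite mulr_ge0 ?l1norm_ge0.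
have r0 : 0 < r by rewrite invr_gt0 mulr_gt0 // ltr_wpDl.
have ra : 4 * (r * a) < 1.
  have r_a1 : 4 * r * (a + 1) = 1 by rewrite /r; field; lra.
  nra.
have [e [e01 Xe0]] := sup_adherent r0 supE; rewrite -/s => se.
have es : e <= s by apply: sup_upper_bound.
set t := Num.min 1 (s + r).
have t1 : t <= 1 by rewrite ge_min lexx.
have t_sr : t <= s + r by rewrite ge_min lexx orbT.
have et : e <= t by rewrite le_min (andP e01).2 /=; lra.
have Xe2 : l1norm (X e) <= 2 * l1norm (X s).
  apply: l1norm_resolvent_near => //.
  apply: (le_trans (y := r * a)); last by lra.
  by rewrite ler_wpM2r // ler_norml; apply/andP; split; lra.
have Xt0 : nnegmx (X t).
  apply: (nnegmx_resolvent_step _ t1 et _ Xe0); first by case/andP: e01.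
  apply: le_lt_trans ra; have -> : 4 * (r * a) = (2 * r) * (2 * a) by ring.
  apply: ler_pM; rewrite ?subr_ge0 ?mulr_ge0 ?l1norm_ge0 //; first lra.
  by rewrite /a mulrA ler_wpM2r ?l1norm_ge0.
have ts : t <= s.
  by apply: sup_upper_bound => //; split=> //; rewrite t1 (le_trans _ et) //; case/andP: e01.
have t_eq1 : t = 1.
  apply/eqP; rewrite eq_le t1 le_min lexx /=.
  by move: ts; rewrite /t ge_min => /orP[]; lra.
by move: Xt0; rewrite t_eq1 scale1r.
Qed.
End Continuation.

Lemma unitmx_1sub n (N : 'M[R]_n) : spectral_radius N < 1 -> 1%:M - N \in unitmx.
Proof. by move=> N_lt1; rewrite -[N]scale1r unitmx_1subZ // ler01 lexx. Qed.

Lemma nnegmx_inv_1sub_spectral n (N : 'M[R]_n) :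
  nnegmx N -> spectral_radius N < 1 -> nnegmx (invmx (1%:M - N)).
Proof. by move=> N0 N_lt1; apply: nnegmx_inv_1sub => // s; apply: unitmx_1subZ. Qed.

Lemma sum_expr_le_inv_1sub n (N : 'M[R]_n) T :
  nnegmx N -> spectral_radius N < 1 ->
  forall l k, (\sum_(t < T) N ^+ t) l k <= invmx (1%:M - N) l k.
Proof.
move=> N0 N_lt1 l k; set X := invmx (1%:M - N).
have X_fix : X = 1%:M + N *m X.
  apply/eqP; rewrite -subr_eq -{1}[X]mul1mx -mulmxBl.
  by rewrite /X mulmxV ?unitmx_1sub.
have X_neumann K : X = \sum_(t < K) N ^+ t + N ^+ K *m X.
  elim: K => [|K IHK]; first by rewrite big_ord0 add0r expr0 -idmxE mul1mx.
  rewrite {1}IHK big_ord_recr /= -addrA {1}X_fix mulmxDr mulmx1.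
  by rewrite exprSr -mulmxE mulmxA.
rewrite {1}(X_neumann T) mxE lerDl.
by apply: nnegmx_mul; [apply: nnegmxX | apply: nnegmx_inv_1sub_spectral].
Qed.

Definition sqfrob m n (M : 'M[R]_(m, n)) : R := \sum_i \sum_j M i j ^+ 2.

Lemma sqfrob_ge0 m n (M : 'M[R]_(m, n)) : 0 <= sqfrob M.
Proof. by apply: sumr_ge0 => i _; apply: sumr_ge0 => j _; apply: sqr_ge0. Qed.

Lemma mxtrace_mul_tr m n (M : 'M[R]_(m, n)) : \tr (M *m M^T) = sqfrob M.
Proof.
apply: eq_bigr => i _; rewrite mxE; apply: eq_bigr => j _.
by rewrite mxE expr2.
Qed.

Lemma ler_sqfrob m n (M M' : 'M[R]_(m, n)) :
  (forall i j, `|M i j| <= M' i j) -> sqfrob M <= sqfrob M'.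
Proof.
move=> le_MM'; apply: ler_sum => i _; apply: ler_sum => j _.
rewrite -real_normK ?num_real // lerXn2r ?nnegrE //.
exact: le_trans (normr_ge0 _) (le_MM' i j).
Qed.

Lemma sum_sqfrob_le (I : finType) m n (M : I -> 'M[R]_(m, n)) :
  (forall t, nnegmx (M t)) -> \sum_t sqfrob (M t) <= sqfrob (\sum_t M t).
Proof.
move=> M0; rewrite /sqfrob exchange_big; apply: ler_sum => i _ /=.
rewrite exchange_big; apply: ler_sum => j _ /=.
rewrite summxE expr2 mulr_suml; apply: ler_sum => t _.
rewrite expr2 ler_wpM2l ?M0 // (bigD1 t) //= lerDl.
by apply: sumr_ge0 => k _; apply: M0.
Qed.

Lemma ler_abs_mulmx m n p (M M' : 'M[R]_(m, n)) (N N' : 'M[R]_(n, p)) :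
  (forall i j, `|M i j| <= M' i j) -> (forall i j, `|N i j| <= N' i j) ->
  forall i j, `|(M *m N) i j| <= (M' *m N') i j.
Proof.
move=> le_MM' le_NN' i j; rewrite !mxE.
apply: (le_trans (ler_norm_sum _ _ _)); apply: ler_sum => k _.
by rewrite normrM ler_pM.
Qed.

Lemma ler_abs_exprmx n (Z N : 'M[R]_n) t :
  (forall i j, `|Z i j| <= N i j) -> forall i j, `|(Z ^+ t) i j| <= (N ^+ t) i j.
Proof.
move=> le_ZN; elim: t => [|t IHt] i j.
  by rewrite !expr0 -idmxE mxE ger0_norm ?nnegmx1.
by rewrite !exprS -!mulmxE; apply: ler_abs_mulmx.
Qed.

Lemma tr_gramian_le n m T (Z N : 'M[R]_n) (B : 'M[R]_(n, m)) :
  nnegmx N -> spectral_radius N < 1 -> (forall i j, `|Z i j| <= N i j) ->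
  \tr (gramian T Z B) <= sqfrob (invmx (1%:M - N) *m absmx B).
Proof.
move=> N0 N_lt1 le_ZN.
have absB i j : `|B i j| <= absmx B i j by rewrite mxE.
have NB0 t : nnegmx (N ^+ t *m absmx B) by apply: nnegmx_mul (nnegmxX _ N0) (nnegmx_abs _).
apply: (le_trans (y := \sum_(t < T) sqfrob (N ^+ t *m absmx B))).
  rewrite (big_morph _ (@mxtraceD _ _) (mxtrace0 _ _)); apply: ler_sum => t _.
  rewrite -mulmxA -trmx_mul mxtrace_mul_tr.
  by apply: ler_sqfrob; apply: ler_abs_mulmx => //; apply: ler_abs_exprmx.
apply: le_trans (sum_sqfrob_le (M := fun t : 'I_T => N ^+ t *m absmx B) (fun t => NB0 t)) _.
have sumN0 : nnegmx (\sum_(t < T) N ^+ t).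
  by move=> k l; rewrite summxE sumr_ge0 // => t _; apply: nnegmxX.
apply: ler_sqfrob => i j; rewrite -mulmx_suml ger0_norm ?(nnegmx_mul sumN0 (nnegmx_abs B)) //.
rewrite !mxE; apply: ler_sum => l _; rewrite ler_wpM2r ?mxE //.
exact: sum_expr_le_inv_1sub.
Qed.

Lemma mul_unitv n p (M : 'M[R]_(p, n)) k : M *m unitv k = col k M.
Proof. by rewrite colE. Qed.

Lemma unitv_tr_mul n p (M : 'M[R]_(n, p)) k : (unitv k)^T *m M = row k M.
Proof. by rewrite /unitv trmx_delta rowE. Qed.

Lemma unitv_entry n (M : 'M[R]_n) p q : ((unitv p)^T *m M *m unitv q) 0 0 = M p q.
Proof. by rewrite /unitv trmx_delta -rowE -colE !mxE. Qed.

Lemma posdef_unitmx n (W : 'M[R]_n) : posdef W -> W \in unitmx.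
Proof.
move=> [_ W_pos]; rewrite unitmxE unitfE; apply/negP => /det0P [v v_neq0 v_ker].
have := W_pos v^T; rewrite trmx_eq0 trmxK v_ker mul0mx mxE ltxx => /(_ v_neq0).
by [].
Qed.

Lemma posdef_diag_gt0 n (W : 'M[R]_n) k : posdef W -> 0 < W k k.
Proof.
move=> [_ W_pos]; rewrite -unitv_entry; apply: W_pos.
by apply/eqP => /matrixP /(_ k 0); rewrite !mxE !eqxx => /eqP; rewrite oner_eq0.
Qed.

(* The quadratic form at x := W_kk W^-1 e_k - e_k equals W_kk (W_kk W^-1_kk - 1). *)
Lemma posdef_diag_mul_invmx n (W : 'M[R]_n) k : posdef W -> 1 <= W k k * invmx W k k.
Proof.
move=> W_pd; have [W_sym W_pos] := W_pd; have Wkk_gt0 := posdef_diag_gt0 k W_pd.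
set x := W k k *: (invmx W *m unitv k) - unitv k.
have Wx : W *m x = W k k *: unitv k - W *m unitv k.
  by rewrite mulmxBr -scalemxAr mulmxA mulmxV ?posdef_unitmx // mul1mx.
have xWx : (x^T *m W *m x) 0 0 = W k k * (W k k * invmx W k k - 1).
  rewrite -mulmxA Wx mulmxBr -scalemxAr mulmxA -[in x^T *m W]W_sym -trmx_mul Wx.
  by rewrite /x !mul_unitv !mxE !eqxx /= mulr1 subrr subr0.
have : 0 <= (x^T *m W *m x) 0 0.
  by have [->|/W_pos/ltW] := eqVneq x 0; first by rewrite mulmx0 mxE.
by rewrite xWx pmulr_rge0 // subr_ge0.
Qed.

Lemma sum_mul_sum (I : finType) (P : pred I) (F G : I -> R) :
  \sum_(k | P k) \sum_(l | P l) F k * G l = (\sum_(k | P k) F k) * (\sum_(l | P l) G l).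
Proof. by rewrite mulr_suml; apply: eq_bigr => k _; rewrite mulr_sumr. Qed.

(* Lagrange's identity: the gap is half the sum of the squares (F k G l - F l G k)^2. *)
Lemma cauchy_schwarz (I : finType) (P : pred I) (F G : I -> R) :
  (\sum_(k | P k) F k * G k) ^+ 2 <= (\sum_(k | P k) F k ^+ 2) * (\sum_(k | P k) G k ^+ 2).
Proof.
have : 0 <= \sum_(k | P k) \sum_(l | P l) (F k * G l - F l * G k) ^+ 2.
  by apply: sumr_ge0 => k _; apply: sumr_ge0 => l _; apply: sqr_ge0.
have -> : \sum_(k | P k) \sum_(l | P l) (F k * G l - F l * G k) ^+ 2 =
   \sum_(k | P k) \sum_(l | P l) F k ^+ 2 * G l ^+ 2
   + \sum_(k | P k) \sum_(l | P l) G k ^+ 2 * F l ^+ 2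
   - 2 * \sum_(k | P k) \sum_(l | P l) (F k * G k) * (F l * G l).
  rewrite mulr_sumr -big_split -sumrB /=; apply: eq_bigr => k _.
  rewrite mulr_sumr -big_split -sumrB /=; apply: eq_bigr => l _.
  by ring.
rewrite !sum_mul_sum [(\sum_(k | P k) G k ^+ 2) * _]mulrC expr2; lra.
Qed.

Lemma sum_inv_mul_sum_ge n (d : 'I_n -> R) :
  (forall k, 0 < d k) -> (n ^ 2)%:R <= (\sum_k (d k)^-1) * (\sum_k d k).
Proof.
move=> d_gt0; have d_ge0 k := ltW (d_gt0 k).
have := cauchy_schwarz xpredT (fun k => Num.sqrt (d k)^-1) (fun k => Num.sqrt (d k)).
under eq_bigr => k _ do rewrite -sqrtrM ?invr_ge0 ?d_ge0 // mulVf ?gt_eqF ?d_gt0 // sqrtr1.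
under [X in _ <= X * _]eq_bigr => k _ do rewrite sqr_sqrtr ?invr_ge0 ?d_ge0 //.
under [X in _ <= _ * X]eq_bigr => k _ do rewrite sqr_sqrtr ?d_ge0 //.
by rewrite sumr_const card_ord -natrX.
Qed.

Lemma tr_invmx_ge n (W : 'M[R]_n) (h : R) :
  (0 < n)%N -> posdef W -> \tr W <= h -> (n ^ 2)%:R / h <= \tr (invmx W).
Proof.
move=> n_gt0 W_pd trW_le.
have diag_gt0 k : 0 < W k k := posdef_diag_gt0 k W_pd.
have trW_gt0 : 0 < \tr W.
  rewrite /mxtrace (bigD1 (Ordinal n_gt0)) //= ltr_pwDl //.
  by apply: sumr_ge0 => k _; apply: ltW.
apply: (le_trans (y := (n ^ 2)%:R / \tr W)).
  by rewrite ler_wpM2l // lef_pV2 ?posrE // (lt_le_trans trW_gt0).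
apply: (le_trans (y := \sum_k (W k k)^-1)).
  by rewrite ler_pdivrMr // sum_inv_mul_sum_ge.
apply: ler_sum => k _.
by rewrite -[(W k k)^-1]mulr1 ler_pdivrMl // posdef_diag_mul_invmx.
Qed.

Lemma sqfrob_col n (x : 'cV[R]_n) : sqfrob x = \sum_k x k 0 ^+ 2.
Proof. by apply: eq_bigr => k _; rewrite big_ord1. Qed.

Lemma sqfrob_row n (v : 'rV[R]_n) : sqfrob v = \sum_c v 0 c ^+ 2.
Proof. by rewrite /sqfrob big_ord1. Qed.

Lemma two_mul_le_add (u v z : R) : 0 <= u -> 0 <= v -> z ^+ 2 <= u * v -> 2 * z <= u + v.
Proof.
move=> u0 v0 z2; have [z_le0|z_gt0] := lerP z 0; first lra.
have uv : 4 * (u * v) <= (u + v) ^+ 2 by have := sqr_ge0 (u - v); nra.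
rewrite -ler_sqr ?nnegrE; nra.
Qed.

Lemma cross_term_le n m (V : 'M[R]_(n, m)) (x : 'cV[R]_n) i :
  2 * (\sum_k \sum_c V k c * x k 0 * V i c) <= (x i 0 + Num.sqrt (sqfrob x)) * sqfrob V.
Proof.
set p := x i 0; set s := Num.sqrt (sqfrob x).
set q2 := \sum_(k | k != i) x k 0 ^+ 2.
set a0 := \sum_c V i c ^+ 2; set b0 := \sum_(k | k != i) \sum_c V k c ^+ 2.
pose y c := \sum_(k | k != i) x k 0 * V k c.
set z := \sum_c V i c * y c.
have q2_ge0 : 0 <= q2 by apply: sumr_ge0 => k _; apply: sqr_ge0.
have a0_ge0 : 0 <= a0 by apply: sumr_ge0 => c _; apply: sqr_ge0.
have b0_ge0 : 0 <= b0 by apply: sumr_ge0 => k _; apply: sumr_ge0 => c _; apply: sqr_ge0.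
have s_ge0 : 0 <= s := sqrtr_ge0 _.
have s2 : s ^+ 2 = p ^+ 2 + q2.
  by rewrite sqr_sqrtr ?sqfrob_ge0 // sqfrob_col (bigD1 i).
have ps : - s <= p <= s by apply/andP; split; nra.
have q2_eq : q2 = (s - p) * (s + p) by rewrite -subr_sqr s2 addrC addKr.
have S1_eq : \sum_k \sum_c V k c * x k 0 * V i c = p * a0 + z.
  rewrite exchange_big /= /a0 /z mulr_sumr -big_split /=; apply: eq_bigr => c _.
  rewrite (bigD1 i) //= mulr_sumr; congr (_ + _); first by rewrite /p; ring.
  by apply: eq_bigr => k _; ring.
have S0_eq : sqfrob V = a0 + b0 by rewrite /sqfrob (bigD1 i).
have z_le : z ^+ 2 <= ((s - p) * a0) * ((s + p) * b0).
  have y_le : \sum_c y c ^+ 2 <= q2 * b0.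
    rewrite /b0 exchange_big /= mulr_sumr; apply: ler_sum => c _.
    exact: cauchy_schwarz.
  apply: le_trans (cauchy_schwarz _ _ _) _.
  have -> : (s - p) * a0 * ((s + p) * b0) = a0 * (q2 * b0) by rewrite q2_eq; ring.
  by rewrite ler_wpM2l.
have := two_mul_le_add _ _ z_le.
have [ps_l ps_r] := andP ps.
rewrite S1_eq S0_eq !mulr_ge0 ?subr_ge0 -?lerNl //; lra.
Qed.

Lemma sqfrob_rank_one_update_le n m (V : 'M[R]_(n, m)) (x : 'cV[R]_n) i (a : R) :
  0 <= a ->
  sqfrob (V + a *: (x *m row i V)) <=
    (1 + a * (x i 0 + Num.sqrt (sqfrob x))) * sqfrob V + a ^+ 2 * (sqfrob x * sqfrob (row i V)).
Proof.
move=> a0.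
have -> : sqfrob (V + a *: (x *m row i V)) = sqfrob V
    + a * (2 * \sum_k \sum_c V k c * x k 0 * V i c) + a ^+ 2 * (sqfrob x * sqfrob (row i V)).
  rewrite sqfrob_col sqfrob_row mulr_suml !mulr_sumr -!big_split /=; apply: eq_bigr => k _.
  rewrite !mulr_sumr -!big_split /=; apply: eq_bigr => c _.
  by rewrite !mxE big_ord1 !mxE; ring.
have := ler_wpM2l a0 (cross_term_le V x i); lra.
Qed.

Lemma mulmx_rank_one n p q (M : 'M[R]_(p, n)) (Y : 'M[R]_(n, q)) i j :
  M *m (unitv j *m (unitv i)^T) *m Y = col j M *m row i Y.
Proof. by rewrite /unitv trmx_delta colE rowE !mulmxA. Qed.

Lemma rank_one_update_inv n (N X X' : 'M[R]_n) (d : R) i j :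
  X *m (1%:M - N) = 1%:M ->
  (1%:M - (N + d *: (unitv j *m (unitv i)^T))) *m X' = 1%:M ->
  0 <= X i j -> 0 <= X' i j ->
  0 < 1 - d * X i j /\ X' = X + (d / (1 - d * X i j)) *: (col j X *m row i X).
Proof.
move=> X_inv X'_inv Xij_ge0 X'ij_ge0.
have X'_eq : X' = X + d *: (col j X *m row i X').
  have X'_fix : (1%:M - N) *m X' = 1%:M + d *: (unitv j *m (unitv i)^T *m X').
    move: X'_inv; rewrite opprD addrA [(_ - _ - _) *m _]mulmxDl mulNmx => /eqP; rewrite subr_eq => /eqP ->.
    by rewrite -scalemxAl.
  rewrite -[X' in LHS]mul1mx -X_inv -mulmxA X'_fix mulmxDr mulmx1 -scalemxAr.
  by rewrite mulmxA mulmx_rank_one.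
set c := 1 - d * X i j.
have X'_entry k l : X' k l = X k l + d * X k j * X' i l.
  by rewrite {1}X'_eq !mxE big_ord1 !mxE mulrA.
have row_X' l : c * X' i l = X i l.
  by rewrite /c mulrBl mul1r {1}X'_entry addrK.
have c_neq0 : c != 0.
  apply/eqP => c_eq0; have := congr1 (fun M : 'M[R]_n => M i i) X_inv.
  rewrite !mxE eqxx big1 => [/eqP|l _]; first by rewrite eq_sym oner_eq0.
  by rewrite -row_X' c_eq0 !mul0r.
have c_gt0 : 0 < c.
  rewrite lt_neqAle eq_sym c_neq0 /=; rewrite leNgt; apply/negP => c_lt0.
  have Xij_eq0 : X i j = 0.
    by apply/eqP; rewrite eq_le Xij_ge0 -row_X' andbT nmulr_rle0.
  by move: c_lt0; rewrite /c Xij_eq0 mulr0 subr0 ltr10.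
split=> //; apply/matrixP => k l.
rewrite X'_entry !mxE big_ord1 !mxE -(row_X' l).
by congr (_ + _); field.
Qed.

Lemma le_bigmax_offdiag n (F : 'I_n -> 'I_n -> R) p q : q != p ->
  F p q <= \big[Num.max/0]_(p' < n) \big[Num.max/0]_(q' < n | q' != p') F p' q'.
Proof.
move=> qp; apply: le_trans (le_bigmax _ (fun p' => \big[Num.max/0]_(q' < n | q' != p') F p' q') p).
exact: le_bigmax_cond.
Qed.

Lemma mxtrace_Hmx n m (A : 'M[R]_n) (B : 'M[R]_(n, m)) :
  \tr (Hmx A B) = sqfrob (Xmx A *m absmx B).
Proof. by rewrite /Hmx -mxtrace_mul_tr trmx_mul !mulmxA. Qed.

Lemma alpha_pq_le_alpha n (A : 'M[R]_n) w p q : q != p -> alpha_pq A w p q <= alpha A w.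
Proof. exact: (le_bigmax_offdiag (alpha_pq A w)). Qed.

Lemma Xmx_entry_add_colnorm_le_beta n (A : 'M[R]_n) p q : q != p ->
  Xmx A p q + Num.sqrt (sqfrob (col q (Xmx A))) <= beta A.
Proof.
move=> qp; rewrite /beta le_max; apply/orP; right; apply: lerD.
  rewrite -[Xmx A p q]unitv_entry.
  exact: (le_bigmax_offdiag (fun p q => ((unitv p)^T *m Xmx A *m unitv q) 0 0)).
have -> : Num.sqrt (sqfrob (col q (Xmx A))) = colnorm (Xmx A *m unitv q).
  by rewrite /colnorm mul_unitv sqfrob_col.
exact: (le_bigmax _ (fun q => colnorm (Xmx A *m unitv q))).
Qed.

Lemma sqfrob_col_le_gamma n (A : 'M[R]_n) q : sqfrob (col q (Xmx A)) <= gamma A.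
Proof.
apply: le_trans (le_bigmax _ (fun k => ((unitv k)^T *m (Xmx A)^T *m Xmx A *m unitv k) 0 0) q).
rewrite -trmx_mul !mul_unitv !mxE sqfrob_col.
by apply: ler_sum => k _; rewrite !mxE expr2.
Qed.

Lemma sqfrob_row_le_gammabar n m (A : 'M[R]_n) (B : 'M[R]_(n, m)) p :
  sqfrob (row p (Xmx A *m absmx B)) <= gammabar A B.
Proof.
set V := Xmx A *m absmx B.
apply: le_trans (le_bigmax _ (fun k =>
  ((unitv k)^T *m Xmx A *m absmx B *m (absmx B)^T *m (Xmx A)^T *m unitv k) 0 0) p).
rewrite unitv_tr_mul -row_mul -/V -(mulmxA _ (absmx B)^T) -trmx_mul -/V.
rewrite mul_unitv !mxE sqfrob_row.
by apply: ler_sum => c _; rewrite !mxE expr2.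
Qed.

Lemma tr_invmx_gramian_rank_one_ge n m (A : 'M[R]_n) (B : 'M[R]_(n, m)) T i j (w : R) :
  spectral_radius (absmx A) < 1 -> i != j ->
  spectral_radius (absmx A + `|w| *: (unitv j *m (unitv i)^T)) < 1 ->
  posdef (gramian T (A + w *: (unitv j *m (unitv i)^T)) B) ->
  (n ^ 2)%:R / ((1 + alpha A w * beta A) * \tr (Hmx A B) + alpha A w ^+ 2 * gamma A * gammabar A B)
    <= \tr (invmx (gramian T (A + w *: (unitv j *m (unitv i)^T)) B)).
Proof.
move=> A_lt1 ij A'_lt1 W_pd; rewrite eq_sym in ij.
set E := unitv j *m (unitv i)^T; set N' := absmx A + `|w| *: E.
set X := Xmx A; set V := X *m absmx B.
have E0 : nnegmx E by apply: nnegmx_mul => p q; rewrite !mxE ler0n.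
have N'0 : nnegmx N' := nnegmxD (nnegmx_abs A) (nnegmxZ (normr_ge0 w) E0).
have X0 : nnegmx X := nnegmx_inv_1sub_spectral (nnegmx_abs A) A_lt1.
have X'0 := nnegmx_inv_1sub_spectral N'0 A'_lt1.
have [c_gt0 X'_eq] := rank_one_update_inv (X := X) (mulVmx (unitmx_1sub A_lt1))
  (mulmxV (unitmx_1sub A'_lt1)) (X0 i j) (X'0 i j).
set a := `|w| / (1 - `|w| * X i j) in X'_eq.
have a_ge0 : 0 <= a by rewrite divr_ge0 // ltW.
have a_le : a <= alpha A w.
  by apply: le_trans (alpha_pq_le_alpha _ _ ij); rewrite /alpha_pq unitv_entry.
have b_ge0 : 0 <= X i j + Num.sqrt (sqfrob (col j X)) by rewrite addr_ge0 ?sqrtr_ge0 ?X0.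
apply: (tr_invmx_ge (leq_ltn_trans (leq0n i) (ltn_ord i)) W_pd).
have le_ZN' p q : `|(A + w *: E) p q| <= N' p q.
  move: (E0 p q); rewrite /N' !mxE => Epq_ge0.
  by rewrite (le_trans (ler_normD _ _)) // normrM (ger0_norm Epq_ge0).
apply: le_trans (tr_gramian_le T B N'0 A'_lt1 le_ZN') _.
rewrite X'_eq mulmxDl -scalemxAl -mulmxA -row_mul -/X -/V.
apply: le_trans (sqfrob_rank_one_update_le _ _ _ a_ge0) _.
rewrite mxtrace_Hmx -/X -/V mxE; apply: lerD.
  rewrite ler_wpM2r ?sqfrob_ge0 // lerD2l ler_pM //.
  exact: Xmx_entry_add_colnorm_le_beta.
have a2_le : a ^+ 2 <= alpha A w ^+ 2 by rewrite lerXn2r ?nnegrE // (le_trans a_ge0).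
rewrite -mulrA; apply: ler_pM => //; first exact: exprn_ge0.
  by rewrite mulr_ge0 ?sqfrob_ge0.
by rewrite ler_pM ?sqfrob_ge0 ?sqfrob_col_le_gamma ?sqfrob_row_le_gammabar.
Qed.

End RealMatrices.

Theorem theorem5p2 (R : realType) (n m : nat) (A : 'M[R]_n) (B : 'M[R]_(n, m))
  (T : nat) (i j : 'I_n) (w : R) :
  spectral_radius (absmx A) < 1 ->
  (0 < T)%N ->
  i != j ->
  spectral_radius (absmx A + `|w| *: (unitv j *m (unitv i)^T)) < 1 ->
  (posdef (gramian T A B) ->
     \tr (invmx (gramian T A B)) >= (n ^ 2)%:R / \tr (Hmx A B)) /\
  (posdef (gramian T (A + w *: (unitv j *m (unitv i)^T)) B) ->
     \tr (invmx (gramian T (A + w *: (unitv j *m (unitv i)^T)) B)) >=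
       (n ^ 2)%:R /
       ((1 + alpha A w * beta A) * \tr (Hmx A B) + alpha A w ^+ 2 * gamma A * gammabar A B)).
Proof.
(* The horizon T is irrelevant: the trace bound on the Gramian holds for every T. *)
move=> A_lt1 _ ij A'_lt1.
have n_gt0 : (0 < n)%N := leq_ltn_trans (leq0n i) (ltn_ord i).
split=> W_pd; last exact: tr_invmx_gramian_rank_one_ge.
apply: tr_invmx_ge => //; rewrite mxtrace_Hmx.
by apply: tr_gramian_le (nnegmx_abs A) A_lt1 _ => p q; rewrite mxE.
Qed.
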